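(* The set of all bicoloured noncrossing configurations (of all sizes $n\ge1$), together with the composition maps $\circ_i$ described in the context and the unique bicoloured noncrossing configuration of size $1$ as unit, forms a (nonsymmetric) operad, where the arity of a configuration is its size.
   Context: For $n\ge2$, a bicoloured noncrossing configuration (BNC) of size $n$ is a regular polygon with $n+1$ vertices numbered $1,\dots,n+1$ clockwise, together with two disjoint sets of arcs, a set of blue arcs and a set of red arcs. An arc is a pair $(i,j)$ with $1\le i<j\le n+1$. The arcs $(i,i+1)$, $1\le i\le n$, are the edges ($(i,i+1)$ is the $i$th edge), $(1,n+1)$ is the base, and all other arcs are diagonals. The required conditions are: no two coloured (blue or red) arcs cross, where $(i,j)$ and $(k,l)$ cross iff $i<k<j<l$ or $k<i<l<j$; and every red arc is a diagonal. An arc that is neither blue nor red is uncoloured. By convention there is exactly one BNC of size $1$: a segment $(1,2)$ that is blue; it serves both as its unique ($1$st) edge and as its base. Composition: let $\mathfrak C$ and $\mathfrak D$ be BNCs of sizes $n$ and $m$, and let $i\in[n]$. Then $\mathfrak E=\mathfrak C\circ_i\mathfrak D$ is the BNC of size $n+m-1$ obtained by gluing the base of $\mathfrak D$ onto the $i$th edge of $\mathfrak C$ (and reshaping into a regular polygon). Concretely, an arc $(a,b)$ of $\mathfrak C$ becomes the arc $(\sigma(a),\sigma(b))$ of $\mathfrak E$, where $\sigma(v)=v$ if $v\le i$ and $\sigma(v)=v+m-1$ if $v>i$. An arc $(a,b)$ of $\mathfrak D$ becomes $(a+i-1,b+i-1)$. All these arcs keep their colours, except the arc $(i,i+m)$ of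 $\mathfrak E$ (the common image of the $i$th edge of $\mathfrak C$ and the base of $\mathfrak D$). This arc is red if both the $i$th edge of $\mathfrak C$ and the base of $\mathfrak D$ are uncoloured, blue if both are blue, and uncoloured otherwise. *)

From mathcomp Require Import all_boot.
Set Implicit Arguments. Unset Strict Implicit. Unset Printing Implicit Defensive.

Inductive colour := Blue | Red | Unc.

(** Only pairs (a,b) with
    1 <= a < b <= n+1 are arcs; well-formedness ([bnc_wf]) requires
    every other pair to be uncoloured, so the configuration is
    determined by its size and the colours of its arcs. *)
Record bnc := BNC { bsize : nat; bcol : nat -> nat -> colour }.

Definition is_arc (n a b : nat) : bool := [&& 1 <= a, a < b & b <= n.+1].
(* diagonal: an arc that is neither an edge (i,i+1) nor the base (1,n+1) *)
Definition is_diag (n a b : nat) : bool :=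
  [&& is_arc n a b, b != a.+1 & ~~ ((a == 1) && (b == n.+1))].

Definition crossing (a b c d : nat) : Prop :=
  (a < c < b /\ b < d) \/ (c < a < d /\ d < b).

Definition bnc_wf (C : bnc) : Prop :=
  let n := bsize C in
  [/\ 1 <= n,
      (forall a b, ~~ is_arc n a b -> bcol C a b = Unc),
      (forall a b, bcol C a b = Red -> is_diag n a b),
      (forall a b c d, bcol C a b <> Unc -> bcol C c d <> Unc -> ~ crossing a b c d)
    & (n = 1 -> bcol C 1 2 = Blue)].
(* For n = 1 the only arc (1,2) is blue; it is both edge and base. *)

Definition glue_colour (c d : colour) : colour :=
  match c, d with
  | Unc, Unc => Red
  | Blue, Blue => Blue
  | _, _ => Unc
  end.

Definition bnc_comp (C : bnc) (i : nat) (D : bnc) : bnc :=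
  let m := bsize D in
  let inner v := (i < v) && (v < i + m) in
  let unsig v := if v <= i then v else v - (m - 1) in
  BNC (bsize C + m - 1)
    (fun a b =>
       if (a == i) && (b == i + m) then glue_colour (bcol C i i.+1) (bcol D 1 m.+1)
       else if (i <= a) && (b <= i + m) then bcol D (a - i).+1 (b - i).+1
       else if inner a || inner b then Unc
       else bcol C (unsig a) (unsig b)).

Definition bnc_unit : bnc :=
  BNC 1 (fun a b => if (a == 1) && (b == 2) then Blue else Unc).

(** Nonsymmetric operad in partial-composition form, on the carrier
    {x : T | P x}, with arity [ar], compositions [comp x i y] (for
    1 <= i <= ar x) and unit [one]. *)
Definition ns_operad (T : Type) (P : T -> Prop) (ar : T -> nat)
    (comp : T -> nat -> T -> T) (one : T) : Prop :=
  (P one /\ ar one = 1) /\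
  (forall x y i, P x -> P y -> 1 <= i <= ar x ->
     P (comp x i y) /\ ar (comp x i y) = ar x + ar y - 1) /\
  (forall x, P x -> comp one 1 x = x) /\
  (forall x i, P x -> 1 <= i <= ar x -> comp x i one = x) /\
  (forall x y z i j, P x -> P y -> P z -> 1 <= i <= ar x -> 1 <= j <= ar y ->
     comp (comp x i y) (i + j - 1) z = comp x i (comp y j z)) /\
  (forall x y z i j, P x -> P y -> P z -> 1 <= i -> i < j -> j <= ar x ->
     comp (comp x i y) (j + ar y - 1) z = comp (comp x j z) i y).

From mathcomp Require Import all_boot zify.
From Stdlib Require Import FunctionalExtensionality.

(* Every operad axiom is an identity between two colourings of pairs (a, b):
   unfolding [bnc_comp] reduces each side to a colour of one of the input
   configurations at shifted indices, selected by comparisons between a, b,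
   the gluing positions and the sizes.  Splitting on all these comparisons
   leaves linear-arithmetic side conditions, except at the glued arcs, where
   the glue operation must be checked directly.  There the key facts are
   that gluing against the blue unit is the identity on non-red colours, and
   that edges and bases are never red. *)

Lemma bnc_ext C D :
  bsize C = bsize D -> (forall a b, bcol C a b = bcol D a b) -> C = D.
Proof.
case: C D => n f [m g] /= -> eq_fg; congr BNC.
by apply: functional_extensionality => a; apply: functional_extensionality.
Qed.

Lemma glue_colour_Blue_l c : c <> Red -> glue_colour Blue c = c.
Proof. by case: c. Qed.

Lemma glue_colour_Blue_r c : c <> Red -> glue_colour c Blue = c.
Proof. by case: c. Qed.

Lemma glue_colour_Red c d : glue_colour c d = Red -> c = Unc /\ d = Unc.
Proof. by case: c; case: d. Qed.

Definition arc_bcol (C : bnc) (a b : nat) : colour :=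
  if is_arc (bsize C) a b then bcol C a b else Unc.

Section WellFormed.

Context {C : bnc} (wfC : bnc_wf C).

Lemma bsize_gt0 : 0 < bsize C.
Proof. by case: wfC. Qed.

Lemma bcol_arc_bcol a b : bcol C a b = arc_bcol C a b.
Proof.
by case: wfC => _ nonarc _ _ _; rewrite /arc_bcol; case: ifP => // /negbT /nonarc.
Qed.

Lemma bcol_coloured_arc a b : bcol C a b <> Unc -> is_arc (bsize C) a b.
Proof. by rewrite bcol_arc_bcol /arc_bcol; case: ifP. Qed.

Lemma bcol_red_diag a b : bcol C a b = Red -> is_diag (bsize C) a b.
Proof. by case: wfC => _ _ red_diag _ _; apply: red_diag. Qed.

Lemma bcol_noncrossing a b c d :
  bcol C a b <> Unc -> bcol C c d <> Unc -> ~ crossing a b c d.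
Proof. by case: wfC => _ _ _ noncross _; apply: noncross. Qed.

Lemma bcol_size1 : bsize C = 1 -> bcol C 1 2 = Blue.
Proof. by case: wfC => _ _ _ _ size1; apply: size1. Qed.

Lemma bcol_edge_nonred a : bcol C a a.+1 <> Red.
Proof. by move/bcol_red_diag; rewrite /is_diag eqxx andbF. Qed.

Lemma bcol_base_nonred : bcol C 1 (bsize C).+1 <> Red.
Proof. by move/bcol_red_diag; rewrite /is_diag !eqxx !andbF. Qed.

End WellFormed.

Arguments bcol_coloured_arc {C} wfC {a b}.
Arguments bcol_red_diag {C} wfC {a b}.
Arguments bcol_noncrossing {C} wfC {a b c d}.

(* [case_ifs] splits on the atoms of every [if] condition of the goal,
   discarding the branches whose arithmetic is contradictory. *)
Ltac case_atom c := lazymatch c with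
  | context [if ?d then _ else _] => case_atom d
  | ?p && _ => case_atom p
  | ?p || _ => case_atom p
  | ~~ ?p => case_atom p
  | _ => let E := fresh "E" in
         destruct c eqn:E; cbn [andb orb negb]; try (exfalso; lia)
  end.
Ltac case_ifs := repeat match goal with
  | |- context [if ?c then _ else _] => case_atom c
  end.

Lemma bcol_congr C a b c d : a = c -> b = d -> bcol C a b = bcol C c d.
Proof. by move=> -> ->. Qed.

Lemma glue_colour_congr c d c' d' :
  c = c' -> d = d' -> glue_colour c d = glue_colour c' d'.
Proof. by move=> -> ->. Qed.

Ltac colour_congr := first
  [ reflexivity
  | apply: bcol_congr; lia
  | apply: glue_colour_congr; [colour_congr | colour_congr] ].

(* [restrict_to_arcs] makes explicit that every well-formed configuration in
   the context is uncoloured outside its arcs, then splits on arc bounds. *)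
Ltac restrict_to_arcs :=
  repeat match goal with
  | wfC : bnc_wf ?C |- context [bcol ?C _ _] => rewrite !(bcol_arc_bcol wfC)
  end;
  rewrite /arc_bcol /is_arc; case_ifs; try colour_congr.

Lemma bnc_unit_wf : bnc_wf bnc_unit.
Proof.
split=> //= [a b|a b|a b c d]; rewrite /is_arc; case_ifs => //; rewrite /crossing; lia.
Qed.

Section Composition.

Variables (C D : bnc) (i : nat).
Hypotheses (wfC : bnc_wf C) (wfD : bnc_wf D) (i_le : 1 <= i <= bsize C).

Lemma bnc_comp_nonarc a b :
  ~~ is_arc (bsize (bnc_comp C i D)) a b -> bcol (bnc_comp C i D) a b = Unc.
Proof.
have n_gt0 := bsize_gt0 wfC; have m_gt0 := bsize_gt0 wfD.
by rewrite /= /is_arc => nonarc; case_ifs; try colour_congr; restrict_to_arcs.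
Qed.

(* The glued arc is red only when the edge of C and the base of D are
   uncoloured, which excludes the size-1 factors: their only arc is blue. *)
Lemma bnc_comp_red_diag a b :
  bcol (bnc_comp C i D) a b = Red -> is_diag (bsize (bnc_comp C i D)) a b.
Proof.
have n_gt0 := bsize_gt0 wfC; have m_gt0 := bsize_gt0 wfD.
rewrite /=; case_ifs; rewrite /is_diag /is_arc.
- move/glue_colour_Red => [edge_unc base_unc].
  have [m1 | m_ne1] := eqVneq (bsize D) 1.
    by move: base_unc; rewrite m1 (bcol_size1 wfD m1).
  have [n1 | n_ne1] := eqVneq (bsize C) 1; last lia.
  have i1 : i = 1 by lia.
  by move: edge_unc; rewrite i1 (bcol_size1 wfC n1).
all: try by move/(bcol_red_diag wfD); rewrite /is_diag /is_arc; lia.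
all: try by move/(bcol_red_diag wfC); rewrite /is_diag /is_arc; lia.
all: done.
Qed.

Lemma bnc_comp_noncrossing a b c d :
  bcol (bnc_comp C i D) a b <> Unc -> bcol (bnc_comp C i D) c d <> Unc ->
  ~ crossing a b c d.
Proof.
have n_gt0 := bsize_gt0 wfC; have m_gt0 := bsize_gt0 wfD.
rewrite /=; case_ifs => col_ab col_cd; rewrite /crossing;
  try by exfalso; first [apply: col_ab | apply: col_cd].
all: try have := bcol_noncrossing wfC col_ab col_cd;
     try have := bcol_noncrossing wfD col_ab col_cd.
all: repeat match goal with
     | col : bcol ?E _ _ <> Unc, wfE : bnc_wf ?E |- _ =>
         have := bcol_coloured_arc wfE col; clear col
     end.
all: rewrite /crossing /is_arc; lia.
Qed.

Lemma bnc_comp_size1 :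
  bsize (bnc_comp C i D) = 1 -> bcol (bnc_comp C i D) 1 2 = Blue.
Proof.
have n_gt0 := bsize_gt0 wfC; have m_gt0 := bsize_gt0 wfD.
rewrite /= => size1; have m1 : bsize D = 1 by lia.
have n1 : bsize C = 1 by lia.
have -> : i = 1 by lia.
by rewrite m1 eqxx (bcol_size1 wfC n1) (bcol_size1 wfD m1).
Qed.

Lemma bnc_comp_wf : bnc_wf (bnc_comp C i D).
Proof.
have n_gt0 := bsize_gt0 wfC; have m_gt0 := bsize_gt0 wfD.
split; [rewrite /=; lia | exact: bnc_comp_nonarc | exact: bnc_comp_red_diag
       | exact: bnc_comp_noncrossing | exact: bnc_comp_size1].
Qed.

Lemma bnc_comp_unit : bnc_comp C i bnc_unit = C.
Proof.
have n_gt0 := bsize_gt0 wfC.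
apply: bnc_ext => [/=|a b /=]; first lia.
case_ifs; try colour_congr; restrict_to_arcs.
all: have -> : a = i by lia.
all: have -> : b = i.+1 by lia.
all: exact/glue_colour_Blue_r/bcol_edge_nonred.
Qed.

End Composition.

Lemma bnc_unit_comp C : bnc_wf C -> bnc_comp bnc_unit 1 C = C.
Proof.
move=> wfC; have n_gt0 := bsize_gt0 wfC.
apply: bnc_ext => [/=|a b /=]; first lia.
case_ifs; try colour_congr; restrict_to_arcs.
all: have -> : a = 1 by lia.
all: have -> : b = (bsize C).+1 by lia.
all: exact/glue_colour_Blue_l/bcol_base_nonred.
Qed.

Section Associativity.

Variables (C D E : bnc) (i j : nat).
Hypotheses (wfC : bnc_wf C) (wfD : bnc_wf D) (wfE : bnc_wf E).

(* The only arc glued twice arises when D has size 1: then both sides glue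
   the edge of C, the arc of D and the base of E, in two different orders. *)
Lemma bnc_comp_seqA :
  1 <= i <= bsize C -> 1 <= j <= bsize D ->
  bnc_comp (bnc_comp C i D) (i + j - 1) E = bnc_comp C i (bnc_comp D j E).
Proof.
move=> i_le j_le; have n_gt0 := bsize_gt0 wfC; have m_gt0 := bsize_gt0 wfD.
have k_gt0 := bsize_gt0 wfE.
apply: bnc_ext => [/=|a b /=]; first lia.
case_ifs; try colour_congr; restrict_to_arcs.
all: have j1 : j = 1 by lia.
all: have m1 : bsize D = 1 by lia.
all: rewrite j1 m1 (bcol_size1 wfD m1).
all: by rewrite (glue_colour_Blue_r _ (bcol_edge_nonred wfC i))
                (glue_colour_Blue_l _ (bcol_base_nonred wfE)).
Qed.

Lemma bnc_comp_parA :
  1 <= i -> i < j -> j <= bsize C ->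
  bnc_comp (bnc_comp C i D) (j + bsize D - 1) E = bnc_comp (bnc_comp C j E) i D.
Proof.
move=> i_ge1 i_lt_j j_le; have n_gt0 := bsize_gt0 wfC; have m_gt0 := bsize_gt0 wfD.
have k_gt0 := bsize_gt0 wfE.
apply: bnc_ext => [/=|a b /=]; first lia.
by case_ifs; try colour_congr; restrict_to_arcs.
Qed.

End Associativity.

Theorem proposition2p1 : ns_operad bnc_wf bsize bnc_comp bnc_unit.
Proof.
split; first by split; [exact: bnc_unit_wf | done].
split; first by move=> C D i wfC wfD i_le; split; [exact: bnc_comp_wf | done].
split; first exact: bnc_unit_comp.
split; first by move=> C i wfC i_le; exact: bnc_comp_unit.
split; first by move=> C D E i j wfC wfD wfE; exact: bnc_comp_seqA.
by move=> C D E i j wfC wfD wfE; exact: bnc_comp_parA.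
Qed.
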